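(* Let $n\geq 2$ and let $H$ be a complex Hadamard matrix of order $n$ with rows $h_1,\dots,h_n$ (each $h_i$ a $1\times n$ row vector). Let $K$ be the $n^2\times n^2$ block matrix whose $(i,j)$-th block (of size $n\times n$) is $h_j^{\ast}h_i$, for $1\le i,j\le n$. Then $Q:=K-I_{n^2}$ is a Seidel matrix associated to an $\left(n^{2},\frac{n(n+1)}{2}\right)$ complex equiangular tight frame.
   Context: A complex Hadamard matrix of order $n$ is an $n\times n$ complex matrix $H$ whose entries all have modulus $1$ and which satisfies $HH^{\ast}=nI_n$, where $^\ast$ denotes conjugate transpose. An $(N,k)$ frame is a Parseval frame of $N$ vectors $f_1,\dots,f_N$ in $\mathbb{C}^k$ (usual inner product), i.e. $\sum_{i=1}^N|\langle x,f_i\rangle|^2=\|x\|^2$ for all $x\in\mathbb{C}^k$; its analysis operator $V$ is the $N\times k$ matrix with $(Vx)_j=\langle x,f_j\rangle$. An $(N,k)$ complex equiangular tight frame (CETF) is an $(N,k)$ frame that is uniform ($\|f_i\|$ constant) and equiangular ($|\langle f_i,f_j\rangle|$ constant for $i\neq j$); for such a frame $VV^{\ast}=\frac{k}{N}I_N+\sqrt{\frac{k(N-k)}{N^2(N-1)}}\,Q$ where $Q$ is a self-adjoint matrix with zero diagonal and all off-diagonal entries of modulus $1$; $Q$ is called the Seidel matrix associated with the frame. *)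

(* Complex numbers: an arbitrary numClosedFieldType C
   (MathComp's abstraction of the complex field: algebraically closed,
   with conjugation, norm and order; algC is one instance). *)
From mathcomp Require Import all_boot all_order all_algebra.
Set Implicit Arguments. Unset Strict Implicit. Unset Printing Implicit Defensive.
Import Order.TTheory GRing.Theory Num.Theory.
Local Open Scope ring_scope.

Section Defs.
Variable C : numClosedFieldType.

Definition ctr m n (A : 'M[C]_(m, n)) : 'M[C]_(n, m) := (map_mx Num.conj A)^T.

Definition complex_hadamard n (H : 'M[C]_n) : Prop :=
  (forall i j, `|H i j| = 1) /\ H *m ctr H = (n%:R)%:M.

(* usual inner product on C^k (linear in the first argument) and norm *)
Definition cdot k (x y : 'rV[C]_k) : C := \sum_(l < k) x 0 l * (y 0 l)^*.
Definition vnorm k (x : 'rV[C]_k) : C := sqrtC (cdot x x).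

Definition parseval_frame N k (f : 'I_N -> 'rV[C]_k) : Prop :=
  forall x : 'rV[C]_k, \sum_(i < N) `|cdot x (f i)| ^+ 2 = vnorm x ^+ 2.

Definition uniform_frame N k (f : 'I_N -> 'rV[C]_k) : Prop :=
  forall i j, vnorm (f i) = vnorm (f j).

Definition equiangular_frame N k (f : 'I_N -> 'rV[C]_k) : Prop :=
  exists c : C, forall i j, i != j -> `|cdot (f i) (f j)| = c.

Definition CETF N k (f : 'I_N -> 'rV[C]_k) : Prop :=
  [/\ parseval_frame f, uniform_frame f & equiangular_frame f].

(* analysis operator: (V x)_j = <x, f_j> *)
Definition analysis_op N k (f : 'I_N -> 'rV[C]_k) : 'M[C]_(N, k) :=
  \matrix_(j, l) (f j 0 l)^*.

Definition seidel_of N k (f : 'I_N -> 'rV[C]_k) (Q : 'M[C]_N) : Prop :=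
  [/\ ctr Q = Q,
      (forall i, Q i i = 0),
      (forall i j, i != j -> `|Q i j| = 1) &
      analysis_op f *m ctr (analysis_op f) =
        (k%:R / N%:R)%:M
        + sqrtC ((k%:R * (N%:R - k%:R)) / (N%:R ^+ 2 * (N%:R - 1))) *: Q].

Definition seidel_of_CETF N k (Q : 'M[C]_N) : Prop :=
  exists f : 'I_N -> 'rV[C]_k, CETF f /\ seidel_of f Q.

(* block indices: a = i*n + p  with i = blk a, p = inblk a *)
Lemma blk_proof n (a : 'I_(n * n)) : (a %/ n < n)%N.
Proof.
case: n a => [|n] a; first by case: a.
by rewrite ltn_divLR // ltn_ord.
Qed.

Lemma inblk_proof n (a : 'I_(n * n)) : (a %% n < n)%N.
Proof.
case: n a => [|n] a; first by case: a.
by rewrite ltn_mod.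
Qed.

Definition blk n (a : 'I_(n * n)) : 'I_n := Ordinal (blk_proof a).
Definition inblk n (a : 'I_(n * n)) : 'I_n := Ordinal (inblk_proof a).

(* K: n^2 x n^2 block matrix whose (i,j) block is h_j^* h_i,
   h_i = row i H; entry (p,q) of that block is conj(H j p) * H i q *)
Definition Kmx n (H : 'M[C]_n) : 'M[C]_(n * n) :=
  \matrix_(a, b) (ctr (row (blk b) H) *m row (blk a) H) (inblk a) (inblk b).

End Defs.
Arguments seidel_of_CETF {C} N k Q.

From mathcomp Require Import all_boot all_order all_algebra.
From mathcomp Require Import ring zify.
Set Implicit Arguments. Unset Strict Implicit. Unset Printing Implicit Defensive.
Import Order.TTheory GRing.Theory Num.Theory.
Local Open Scope ring_scope.

(* Writing [a = (i, p)] and [b = (j, q)], [K a b = conj (H j p) * H i q]: [K] is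
   Hermitian with unimodular entries and a unit diagonal, and [K^2 = n^2]
   because both [H H^*] and [H^* H] are [n].  Hence [G = (1 + K / n) / 2] is an
   orthogonal projection of trace [(n^2 + n) / 2], and for [N = n^2],
   [k = n (n + 1) / 2] it is exactly [k / N + c (K - 1)] with the constant [c]
   of a Seidel matrix.  Factoring [G = B^* B] with [B] a [k x N] matrix with
   orthonormal rows, the columns of [B] are a Parseval frame with Gram matrix
   [G], i.e. an equiangular tight frame whose Seidel matrix is [K - 1]. *)

Section ConjTranspose.
Variable C : numClosedFieldType.

Lemma ctrE m n (A : 'M[C]_(m, n)) i j : ctr A i j = (A j i)^*.
Proof. by rewrite /ctr !mxE. Qed.

Lemma ctrK m n (A : 'M[C]_(m, n)) : ctr (ctr A) = A.
Proof. by apply/matrixP=> i j; rewrite !ctrE conjCK. Qed.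

Lemma ctrM m n p (A : 'M[C]_(m, n)) (B : 'M[C]_(n, p)) :
  ctr (A *m B) = ctr B *m ctr A.
Proof. by rewrite /ctr map_mxM trmx_mul. Qed.

Lemma ctrD m n (A B : 'M[C]_(m, n)) : ctr (A + B) = ctr A + ctr B.
Proof. by rewrite /ctr map_mxD linearD. Qed.

Lemma ctrB m n (A B : 'M[C]_(m, n)) : ctr (A - B) = ctr A - ctr B.
Proof. by rewrite /ctr map_mxB linearB. Qed.

Lemma ctrZ m n a (A : 'M[C]_(m, n)) : ctr (a *: A) = a^* *: ctr A.
Proof. by rewrite /ctr map_mxZ linearZ. Qed.

Lemma ctr_scalar n a : ctr (a%:M : 'M[C]_n) = (a^*)%:M.
Proof. by rewrite /ctr map_scalar_mx tr_scalar_mx. Qed.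

End ConjTranspose.

Section FrameOfCoisometry.
Variables (C : numClosedFieldType) (r N : nat) (B : 'M[C]_(r, N)).

Definition frame_of_cols : 'I_N -> 'rV[C]_r := fun j => (col j B)^T.

Lemma analysis_op_cols : analysis_op frame_of_cols = ctr B.
Proof. by apply/matrixP=> i j; rewrite !mxE. Qed.

Lemma cdot_cols i j : cdot (frame_of_cols i) (frame_of_cols j) = (ctr B *m B) j i.
Proof. by rewrite mxE; apply: eq_bigr => l _; rewrite !mxE mulrC. Qed.

Lemma parseval_cols : B *m ctr B = 1%:M -> parseval_frame frame_of_cols.
Proof.
move=> BBt x; rewrite /vnorm sqrtCK.
set y := x *m map_mx Num.conj B.
have cdot_y i : cdot x (frame_of_cols i) = y 0 i.
  by rewrite mxE; apply: eq_bigr => l _; rewrite !mxE.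
have conjB_unitary : map_mx Num.conj B *m ctr (map_mx Num.conj B) = 1%:M.
  have -> : ctr (map_mx Num.conj B) = B^T.
    by apply/matrixP=> i j; rewrite ctrE !mxE conjCK.
  by rewrite -[map_mx _ B]trmxK -trmx_mul -/(ctr B) BBt tr_scalar_mx.
have -> : \sum_(i < N) `|cdot x (frame_of_cols i)| ^+ 2 = (y *m ctr y) 0 0.
  by rewrite mxE; apply: eq_bigr => i _; rewrite cdot_y normCK ctrE.
rewrite /y ctrM mulmxA -(mulmxA x) conjB_unitary mulmx1 mxE.
by apply: eq_bigr => l _; rewrite ctrE.
Qed.
End FrameOfCoisometry.

Lemma orthonormal_row_basis (C : numClosedFieldType) m N (G : 'M[C]_(m, N)) :
  exists r, exists2 B : 'M[C]_(r, N), B *m ctr B = 1%:M & (B :=: G)%MS.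
Proof.
exists (\rank G), (schmidt (row_base G)).
  move/unitarymxP: (schmidt_unitarymx (row_base G) (rank_leq_col G)) => <-.
  by congr (_ *m _); apply/matrixP=> i j; rewrite !mxE.
exact: eqmx_trans (eqmx_schmidt_free (row_base_free G)) (eq_row_base G).
Qed.

Lemma hermitian_idempotent_factor (C : numClosedFieldType) N k (G : 'M[C]_N) :
  ctr G = G -> G *m G = G -> \tr G = k%:R ->
  exists2 B : 'M[C]_(k, N), B *m ctr B = 1%:M & ctr B *m B = G.
Proof.
move=> hermG idemG trG.
have [r [B BBt eqBG]] := orthonormal_row_basis G.
have GBtB : G *m ctr B *m B = G.
  have GB : (G <= B)%MS by rewrite eqBG.
  by rewrite -[in LHS](mulmxKpV GB) -(mulmxA _ B) BBt mulmx1 mulmxKpV.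
have BG : B *m G = B.
  have BG : (B <= G)%MS by rewrite eqBG.
  by rewrite -[in LHS](mulmxKpV BG) -[_ *m G *m G]mulmxA idemG mulmxKpV.
have GBt : G *m ctr B = ctr B by rewrite -[G]hermG -ctrM BG.
have BtB : ctr B *m B = G by rewrite -[RHS]GBtB GBt.
have rk : r = k.
  by apply/eqP; rewrite -(eqr_nat C) -trG -BtB mxtrace_mulC BBt mxtrace1.
by subst r; exists B.
Qed.

Section SeidelFromProjection.
Variables (C : numClosedFieldType) (N k : nat).

Definition seidel_coef : C :=
  sqrtC ((k%:R * (N%:R - k%:R)) / (N%:R ^+ 2 * (N%:R - 1))).

Definition seidel_gram (Q : 'M[C]_N) : 'M[C]_N :=
  (k%:R / N%:R)%:M + seidel_coef *: Q.

Hypotheses (N_gt1 : (1 < N)%N) (k_leN : (k <= N)%N).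

Lemma seidel_coef_ge0 : 0 <= seidel_coef.
Proof.
rewrite sqrtC_ge0 divr_ge0 ?mulr_ge0 ?sqr_ge0 ?ler0n // subr_ge0 ?ler_nat ?ler1n //.
exact: ltnW.
Qed.

Lemma seidel_of_CETF_of_projection (Q : 'M[C]_N) :
  ctr Q = Q -> (forall i, Q i i = 0) -> (forall i j, i != j -> `|Q i j| = 1) ->
  seidel_gram Q *m seidel_gram Q = seidel_gram Q ->
  seidel_of_CETF N k Q.
Proof.
move=> hermQ Q_diag Q_offdiag idemG; set G := seidel_gram Q in idemG.
have c_ge0 := seidel_coef_ge0.
have N_neq0 : (N%:R : C) != 0 by rewrite pnatr_eq0 -lt0n ltnW.
have GE i j : G i j = k%:R / N%:R * (i == j)%:R + seidel_coef * Q i j.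
  by rewrite !mxE mulr_natr.
have hermG : ctr G = G.
  by rewrite ctrD ctrZ hermQ ctr_scalar !geC0_conj ?divr_ge0 ?ler0n.
have trG : \tr G = k%:R.
  rewrite /mxtrace (eq_bigr (fun=> k%:R / N%:R)) => [|i _]; last first.
    by rewrite GE Q_diag eqxx mulr0 addr0 mulr1.
  by rewrite sumr_const card_ord -[_ *+ N]mulr_natr divfK.
have [B BBt BtB] := hermitian_idempotent_factor hermG idemG trG.
have cdotE i j : cdot (frame_of_cols B i) (frame_of_cols B j) = G j i.
  by rewrite cdot_cols BtB.
exists (frame_of_cols B); split; first split.
- exact: parseval_cols.
- by move=> i j; rewrite /vnorm !cdotE !GE !Q_diag !eqxx.
- exists seidel_coef => i j ij; rewrite cdotE GE eq_sym (negbTE ij) mulr0 add0r.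
  by rewrite normrM Q_offdiag 1?eq_sym // mulr1 ger0_norm.
- by split=> //; rewrite analysis_op_cols ctrK BtB.
Qed.

End SeidelFromProjection.
Arguments seidel_coef {C} N k.
Arguments seidel_gram {C} N k Q.

Section BlockIndex.
Variable n : nat.

Lemma blkidx_proof (j q : 'I_n) : (j * n + q < n * n)%N.
Proof. by have := ltn_ord j; have := ltn_ord q; nia. Qed.

Definition blkidx (j q : 'I_n) : 'I_(n * n) := Ordinal (blkidx_proof j q).

Lemma blk_blkidx (j q : 'I_n) : blk (blkidx j q) = j.
Proof.
apply/val_inj => /=; have q_lt := ltn_ord q.
by rewrite divnMDl ?divn_small ?addn0 //; apply: leq_ltn_trans q_lt.
Qed.

Lemma inblk_blkidx (j q : 'I_n) : inblk (blkidx j q) = q.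
Proof. by apply/val_inj => /=; rewrite modnMDl modn_small. Qed.

Lemma blkidxK (a : 'I_(n * n)) : blkidx (blk a) (inblk a) = a.
Proof. by apply/val_inj => /=; rewrite -divn_eq. Qed.

Lemma eq_blk_inblk (a b : 'I_(n * n)) :
  (a == b) = (blk a == blk b) && (inblk a == inblk b).
Proof.
apply/eqP/andP => [-> //|[/eqP ab_blk /eqP ab_inblk]].
by rewrite -[a]blkidxK -[b]blkidxK ab_blk ab_inblk.
Qed.

Lemma sum_blkidx (R : nmodType) (F : 'I_(n * n) -> R) :
  \sum_(a < n * n) F a = \sum_(j < n) \sum_(q < n) F (blkidx j q).
Proof.
rewrite pair_big /= (reindex (fun p : 'I_n * 'I_n => blkidx p.1 p.2)) //=.
exists (fun a => (blk a, inblk a)) => [[j q] _|a _] /=.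
  by rewrite blk_blkidx inblk_blkidx.
exact: blkidxK.
Qed.

End BlockIndex.

Section BlockMatrixK.
Variables (C : numClosedFieldType) (n : nat) (H : 'M[C]_n).

Lemma KmxE a b : Kmx H a b = (H (blk b) (inblk a))^* * H (blk a) (inblk b).
Proof. by rewrite !mxE big_ord1 !mxE. Qed.

Lemma ctr_Kmx : ctr (Kmx H) = Kmx H.
Proof. by apply/matrixP=> a b; rewrite ctrE !KmxE rmorphM /= conjCK mulrC. Qed.

Lemma Kmx_sub1E a b : (Kmx H - 1%:M) a b = Kmx H a b - (a == b)%:R.
Proof. by rewrite mxE [X in _ + X]mxE [1%:M a b]mxE. Qed.

Hypothesis hadH : complex_hadamard H.

Lemma Kmx_diag a : Kmx H a a = 1.
Proof. by rewrite KmxE mulrC -normCK hadH.1 expr1n. Qed.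

Lemma norm_Kmx a b : `|Kmx H a b| = 1.
Proof. by rewrite KmxE normrM norm_conjC !hadH.1 mulr1. Qed.

Lemma hadamard_ctr_mul : ctr H *m H = n%:R%:M.
Proof.
have [n0|n_gt0] := posnP n; first by subst n; apply/matrixP=> [[]].
have n_neq0 : (n%:R : C) != 0 by rewrite pnatr_eq0 -lt0n.
have : H *m (n%:R^-1 *: ctr H) = 1%:M.
  by rewrite -scalemxAr hadH.2 scale_scalar_mx mulVf.
move/mulmx1C; rewrite -scalemxAl => /(congr1 (fun M => n%:R *: M)).
by rewrite scalerA divff // scale1r scale_scalar_mx mulr1.
Qed.

Lemma Kmx_sqr : Kmx H *m Kmx H = (n%:R ^+ 2)%:M.
Proof.
apply/matrixP=> a c; rewrite mxE sum_blkidx.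
have KK_factor j q : Kmx H a (blkidx j q) * Kmx H (blkidx j q) c =
    ((H j (inblk a))^* * H j (inblk c)) * (H (blk a) q * (H (blk c) q)^*).
  by rewrite !KmxE blk_blkidx inblk_blkidx; ring.
under eq_bigr do under eq_bigr do rewrite KK_factor.
under eq_bigr do rewrite -mulr_sumr.
rewrite -mulr_suml.
have -> : \sum_(q < n) H (blk a) q * (H (blk c) q)^* = (H *m ctr H) (blk a) (blk c).
  by rewrite mxE; apply: eq_bigr => q _; rewrite ctrE.
have -> : \sum_(j < n) (H j (inblk a))^* * H j (inblk c) =
    (ctr H *m H) (inblk a) (inblk c).
  by rewrite mxE; apply: eq_bigr => j _; rewrite ctrE.
rewrite hadH.2 hadamard_ctr_mul !mxE eq_blk_inblk.
by do 2 case: eqP; rewrite ?mulr0 ?mul0r ?mulr1 // expr2.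
Qed.

End BlockMatrixK.

Section HadamardFrame.
Variables (C : numClosedFieldType) (n : nat) (H : 'M[C]_n).
Hypothesis n_ge2 : (2 <= n)%N.

Local Notation N := (n * n)%N.
Local Notation k := (n * (n + 1) %/ 2)%N.

Lemma seidel_gram_Kmx :
  seidel_gram N k (Kmx H - 1%:M) = 2^-1 *: (1%:M + n%:R^-1 *: Kmx H).
Proof.
set x : C := n%:R.
have x_gt0 : 0 < x by rewrite ltr0n; apply: leq_trans n_ge2.
have x_neq0 : x != 0 by rewrite gt_eqF.
have xx1_neq0 : x * x - 1 != 0.
  rewrite -natrM -(natrB _ (_ : 1 <= n * n)%N) ?pnatr_eq0; nia.
have k_eq : (k%:R : C) = x * (x + 1) / 2.
  apply: (canRL (mulfK _)); first by rewrite pnatr_eq0.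
  by rewrite -natrM divnK ?dvdn2 ?oddM ?addn1 ?andbN // natrM -natr1.
have c_eq : seidel_coef N k = (2 * x)^-1.
  rewrite /seidel_coef k_eq natrM.
  have -> : x * (x + 1) / 2 * (x * x - x * (x + 1) / 2) / ((x * x) ^+ 2 * (x * x - 1))
     = ((2 * x)^-1) ^+ 2 by field; rewrite x_neq0 xx1_neq0.
  by rewrite sqrCK // invr_ge0 mulr_ge0 // ltW.
rewrite /seidel_gram c_eq k_eq natrM scalerBr scale_scalar_mx mulr1 addrCA addrC.
rewrite -raddfB /= scalerDr scale_scalar_mx mulr1 scalerA.
by congr (_ + _); [congr (_%:M) | congr (_ *: _)]; field.
Qed.

Hypothesis hadH : complex_hadamard H.

Lemma seidel_gram_Kmx_idem :
  seidel_gram N k (Kmx H - 1%:M) *m seidel_gram N k (Kmx H - 1%:M) =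
  seidel_gram N k (Kmx H - 1%:M).
Proof.
have n_neq0 : (n%:R : C) != 0 by rewrite pnatr_eq0 -lt0n ltnW.
rewrite seidel_gram_Kmx -scalemxAl -scalemxAr.
set P := 1%:M + _ *: Kmx H.
have sqrP : P *m P = 2%:R *: P.
  rewrite /P mulmxDl !mulmxDr !mul1mx mulmx1 -scalemxAl -scalemxAr scalerA.
  rewrite Kmx_sqr // scale_scalar_mx -expr2 -exprMn mulVf // expr1n.
  by rewrite [_ + 1%:M]addrC scaler_nat mulr2n.
by rewrite sqrP !scalerA -mulrA mulVf ?pnatr_eq0 // mulr1.
Qed.

End HadamardFrame.

Theorem lemma1 (C : numClosedFieldType) (n : nat) (H : 'M[C]_n) :
  (2 <= n)%N -> complex_hadamard H ->
  seidel_of_CETF (n * n)%N (n * (n + 1) %/ 2)%N (Kmx H - 1%:M).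
Proof.
move=> n_ge2 hadH; apply: seidel_of_CETF_of_projection.
- by nia.
- by rewrite leq_divLR ?dvdn2 ?oddM ?addn1 ?andbN //; nia.
- by rewrite ctrB ctr_Kmx ctr_scalar conjC1.
- by move=> a; rewrite Kmx_sub1E Kmx_diag // eqxx subrr.
- by move=> a b ab; rewrite Kmx_sub1E (negbTE ab) subr0 norm_Kmx.
- exact: seidel_gram_Kmx_idem.
Qed.
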